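(* Let $M$ be a uniformly discrete, bounded, separable pointed metric space and let $X\subset\mathrm{Lip}_0(M)$ be a Banach space such that $X^*=\mathcal F(M)$ isometrically. If for every $x\in M\setminus\{0\}$ the indicator function $\mathbf 1_{\{x\}}$ belongs to $X$, then $X$ is a natural predual of $\mathcal F(M)$. Moreover $0$ is the unique accumulation point of $\delta(M)$ in the $\sigma(\mathcal F(M),X)$ topology, and $X$ is isomorphic to $c_0$.
   Context: A pointed metric space $M$ has a distinguished origin $0$. $M$ is uniformly discrete if $\inf\{d(x,y):x\neq y\}>0$. $\mathrm{Lip}_0(M)$ is the Banach space of real Lipschitz functions on $M$ vanishing at $0$ with the best Lipschitz constant as norm; $\delta(x)$ is evaluation at $x$, and the Lipschitz free space $\mathcal F(M)$ is the closed linear span of $\delta(M)$ in $\mathrm{Lip}_0(M)^*$, with $\mathcal F(M)^*=\mathrm{Lip}_0(M)$. For bounded $M$, a Banach space $X\subset\mathrm{Lip}_0(M)$ is a natural predual of $\mathcal F(M)$ if $X^*=\mathcal F(M)$ isometrically and $\delta(M)$ is $\sigma(\mathcal F(M),X)$-closed. *)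

From mathcomp Require Import all_boot all_order all_algebra.
From mathcomp Require Import boolp classical_sets reals.
Set Implicit Arguments. Unset Strict Implicit. Unset Printing Implicit Defensive.
Import Order.TTheory GRing.Theory Num.Theory.
Local Open Scope ring_scope.
Local Open Scope classical_set_scope.

Section LipFree.
Context {R : realType} {T : Type} (d : T -> T -> R) (o : T).

Definition is_metric : Prop :=
  (forall x y, 0 <= d x y) /\ (forall x y, d x y = 0 <-> x = y) /\
  (forall x y, d x y = d y x) /\ (forall x y z, d x z <= d x y + d y z).

Definition uniformly_discrete : Prop :=
  exists theta : R, 0 < theta /\ forall x y, x <> y -> theta <= d x y.

Definition bounded_metric : Prop := exists B : R, forall x y, d x y <= B.

(** separable: a countable dense subset (M is nonempty, as it is pointed) *)
Definition separable_metric : Prop :=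
  exists s : nat -> T, forall x (e : R), 0 < e -> exists n, d x (s n) < e.

Definition infinite_space : Prop := forall n : nat, exists f : 'I_n -> T, injective f.

Definition Lip0 (f : T -> R) : Prop :=
  f o = 0 /\ exists C : R, forall x y, `|f x - f y| <= C * d x y.

Definition lipnorm (f : T -> R) : R :=
  sup [set r : R | exists x y, x <> y /\ r = `|f x - f y| / d x y].

(** functionals on Lip_0(M) are represented as maps (T -> R) -> R;
    only their values on Lip_0(M) matter. *)
Definition linear_on (A : set (T -> R)) (phi : (T -> R) -> R) : Prop :=
  forall (a : R) f g, A f -> A g ->
    phi (fun x => a * f x + g x) = a * phi f + phi g.

Definition bounded_on (A : set (T -> R)) (phi : (T -> R) -> R) : Prop :=
  exists C : R, forall f, A f -> `|phi f| <= C * lipnorm f.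

Definition dualnorm_on (A : set (T -> R)) (phi : (T -> R) -> R) : R :=
  sup [set r : R | exists f, A f /\ lipnorm f <= 1 /\ r = `|phi f|].

Definition dualnorm := dualnorm_on Lip0.

Definition delta (x : T) : (T -> R) -> R := fun f => f x.

Definition delta_comb (s : seq (R * T)) : (T -> R) -> R :=
  fun f => \sum_(p <- s) p.1 * f p.2.

(** F(M): closed linear span of delta(M) in Lip_0(M)^* *)
Definition inF (phi : (T -> R) -> R) : Prop :=
  linear_on Lip0 phi /\ bounded_on Lip0 phi /\
  forall e : R, 0 < e -> exists s : seq (R * T),
    dualnorm (fun f => phi f - delta_comb s f) <= e.

Definition feq (phi psi : (T -> R) -> R) : Prop :=
  forall f, Lip0 f -> phi f = psi f.

Definition banach_subspace (X : set (T -> R)) : Prop :=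
  (forall f, X f -> Lip0 f) /\ X (fun _ => 0) /\
  (forall (a : R) f g, X f -> X g -> X (fun x => a * f x + g x)) /\
  (forall f, Lip0 f ->
     (forall e : R, 0 < e -> exists g, X g /\ lipnorm (fun x => f x - g x) <= e) ->
     X f).

(** X^* = F(M) isometrically, via the canonical pairing <f, gamma> = gamma(f):
    the restriction map F(M) -> X^* is an isometry onto X^*. *)
Definition isometric_predual (X : set (T -> R)) : Prop :=
  (forall gamma, inF gamma -> dualnorm_on X gamma = dualnorm gamma) /\
  (forall psi, linear_on X psi -> bounded_on X psi ->
     exists gamma, inF gamma /\ forall f, X f -> gamma f = psi f).

(** gamma is in the sigma(F(M),X)-closure of delta(M) *)
Definition weak_closure_delta (X : set (T -> R)) (gamma : (T -> R) -> R) : Prop :=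
  forall (n : nat) (fs : 'I_n -> T -> R) (e : R), (forall i, X (fs i)) -> 0 < e ->
    exists x : T, forall i, `|fs i x - gamma (fs i)| < e.

(** gamma is a sigma(F(M),X)-accumulation point of delta(M) *)
Definition weak_accumulation_delta (X : set (T -> R)) (gamma : (T -> R) -> R) : Prop :=
  forall (n : nat) (fs : 'I_n -> T -> R) (e : R), (forall i, X (fs i)) -> 0 < e ->
    exists x : T, ~ feq (delta x) gamma /\ forall i, `|fs i x - gamma (fs i)| < e.

Definition natural_predual (X : set (T -> R)) : Prop :=
  isometric_predual X /\
  forall gamma, inF gamma -> weak_closure_delta X gamma ->
    exists x : T, feq gamma (delta x).

Definition indicator (x : T) : T -> R := fun y => if pselect (y = x) then 1 else 0.

End LipFree.

Definition c0 {R : realType} (u : nat -> R) : Prop :=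
  forall e : R, 0 < e -> exists N, forall n, (N <= n)%N -> `|u n| < e.

Definition supnorm {R : realType} (u : nat -> R) : R :=
  sup [set r : R | exists n, r = `|u n|].

Definition isomorphic_to_c0 {R : realType} {T : Type} (d : T -> T -> R)
    (X : set (T -> R)) : Prop :=
  exists Phi : (T -> R) -> (nat -> R),
    (forall f, X f -> c0 (Phi f)) /\
    (forall (a : R) f g, X f -> X g ->
       Phi (fun x => a * f x + g x) = (fun n => a * Phi f n + Phi g n)) /\
    (forall u, c0 u -> exists f, X f /\ Phi f = u) /\
    exists C1 C2 : R, 0 < C1 /\ 0 < C2 /\
      forall f, X f -> C1 * lipnorm d f <= supnorm (Phi f) /\
                       supnorm (Phi f) <= C2 * lipnorm d f.

From mathcomp Require Import all_boot all_order all_algebra.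
From mathcomp Require Import boolp classical_sets functions cardinality reals.
From mathcomp Require Import topology normedtype.
From mathcomp Require Import ring lra.
Set Implicit Arguments. Unset Strict Implicit. Unset Printing Implicit Defensive.
Import Order.TTheory GRing.Theory Num.Theory numFieldNormedType.Exports.
Local Open Scope ring_scope.
Local Open Scope classical_set_scope.

(* Let theta > 0 separate the points of M and B bound its diameter. On Lip_0(M)
   the Lipschitz norm is then equivalent to the sup norm, since a function
   bounded by m is (2m/theta)-Lipschitz. Key fact: a functional gamma in F(M)
   with gamma(1_{x}) = 0 for every x <> 0 vanishes, because gamma is
   concentrated on finite sets up to any e, while setting f to 0 on a finite
   set subtracts a combination of indicators (so gamma(f) is unchanged) and
   keeps the Lipschitz norm below 2B/theta times that of f.

   Enumerate M \ {0} as t_0, t_1, ... (M is countable and infinite). If some f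
   in X did not tend to 0 along t, the limit along an ultrafilter concentrated
   on {n | |f(t_n)| >= e} would be a bounded functional on X, i.e. some gamma
   in F(M) = X^*; it kills every indicator, so gamma = 0, contradicting
   |gamma(f)| >= e. Hence f |-> (f(t_n))_n maps X isomorphically onto c_0.
   Similarly, a weak* limit gamma of evaluations takes values in {0,1} on
   indicators, at most once the value 1, so gamma - delta(x) kills all
   indicators for some x. *)

Section UltraLimit.
Context {R : realType} {I : Type} (U : set_system I) {UF : UltraFilter U}.

Lemma fmap_ultra (u : I -> R) : UltraFilter (u @ U).
Proof.
split; first exact: fmap_proper_filter.
move=> G PG sUG; rewrite predeqE => A; split; last exact: sUG.
move=> GA; have [//|UnA] := in_ultra_setVsetC (u @^-1` A) UF.
by have /filter_ex [? []] : G (A `&` ~` A) by apply: filterI GA (sUG _ _).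
Qed.

Definition ulim (u : I -> R) : R := lim (u @ U).

Section BoundedFamily.
Variables (u : I -> R) (Mu : R).
Hypothesis u_le : forall i, `|u i| <= Mu.

Lemma ulim_cvg : u @ U --> ulim u.
Proof.
have := @segment_compact _ (- Mu) Mu; rewrite compact_ultra => /(_ _ (fmap_ultra u)).
case=> [|l [_ ul]]; last by rewrite /ulim (cvg_lim _ ul).
by apply: (@filterE _ U) => i /=; rewrite in_itv /= -ler_norml.
Qed.

Lemma ulim_near e : 0 < e -> \forall i \near U, `|u i - ulim u| < e.
Proof. by move: e; apply/cvgrPdistC_lt; exact: ulim_cvg. Qed.

Lemma ulim_le : `|ulim u| <= Mu.
Proof.
have cvg_u : cvg (u @ U) by apply/cvg_ex; exists (ulim u); exact: ulim_cvg.
by rewrite /ulim -lim_norm //; apply: limr_le; [exact: is_cvg_norm | exact: nearW].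
Qed.

End BoundedFamily.

Lemma ulimD (u v : I -> R) (Mu Mv c : R) :
    (forall i, `|u i| <= Mu) -> (forall i, `|v i| <= Mv) ->
  ulim (fun i => c * u i + v i) = c * ulim u + ulim v.
Proof.
move=> u_le v_le; apply: cvg_lim => //.
exact: cvgD (cvgMl_tmp (ulim_cvg u_le)) (ulim_cvg v_le).
Qed.

End UltraLimit.

Lemma c0_bounded {R : realType} (u : nat -> R) : c0 u -> exists M, forall n, `|u n| <= M.
Proof.
move=> u_c0; have [N u_lt1] := u_c0 1 ltr01.
exists (\sum_(k < N) `|u k| + 1) => n; have [nN|Nn] := ltnP n N.
  by rewrite (bigD1 (Ordinal nN)) //= -addrA lerDl addr_ge0 ?sumr_ge0.
by rewrite (le_trans (ltW (u_lt1 n Nn))) // lerDr sumr_ge0.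
Qed.

Lemma not_c0 {R : realType} (u : nat -> R) : ~ c0 u ->
  exists2 e : R, 0 < e & forall N, exists2 n, (N <= n)%N & e <= `|u n|.
Proof.
move=> u_not_c0; apply: contrapT => u_small; apply: u_not_c0 => e e_gt0.
apply: contrapT => e_far; apply: u_small; exists e => // N.
apply: contrapT => N_small; apply: e_far; exists N => n Nn.
by rewrite ltNge; apply/negP => e_le; apply: N_small; exists n.
Qed.

Lemma ultra_unbounded (A : set nat) : (forall N, exists2 n, (N <= n)%N & A n) ->
  exists U : set_system nat, [/\ UltraFilter U, U A & forall N, U [set n | (N <= n)%N]].
Proof.
move=> A_unbounded; pose tail N := A `&` [set n | (N <= n)%N].
have : ProperFilter (filter_from setT tail).
  apply: filter_from_proper => [|N _]; last first.
    by have [n Nn An] := A_unbounded N; exists n.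
  apply: filter_fromT_filter => [|M N]; first by exists 0%N.
  by exists (maxn M N) => n [An]; rewrite /= geq_max => /andP[].
move=> /ultraFilterLemma[U [UU sU]]; exists U; split => //.
  by apply: sU; exists 0%N => // n [].
by move=> N; apply: sU; exists N => // n [].
Qed.

Lemma infinite_space_setT (T : Type) : @infinite_space T -> infinite_set [set: T].
Proof.
move=> T_inf /finite_set_leP[n T_le_n]; have [f f_inj] := T_inf n.+1.
have [g] : $|{injfun `I_n.+1 >-> [set: T]}|.
  apply/injfunPex; exists (fun k => f (inord k)) => // i j /set_mem i_lt /set_mem j_lt.
  by move/f_inj/(congr1 (@nat_of_ord _)); rewrite !inordK.
have /card_le_trans/(_ T_le_n) := inj_card_le g.
by rewrite card_le_II ltnn.
Qed.

Lemma enum_setT_punctured (T : Type) (o : T) (s : nat -> T) :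
    (forall x, exists n, s n = x) -> infinite_set [set: T] ->
  exists (t : nat -> T) (r : T -> nat),
    [/\ forall n, t n <> o, cancel t r & forall x, x <> o -> t (r x) = x].
Proof.
move=> s_surj T_inf.
have /card_set_bijP[r [_ r_inj r_surj]] : ([set: T] `\ o #= [set: nat])%card.
  apply: eq_card_nat; last exact: infinite_setD T_inf (finite_set1 o).
  apply/countable_injP; have [i s_i] := choice s_surj.
  by exists i => x y _ _ ixy; rewrite -[x]s_i -[y]s_i ixy.
have /choice[t t_spec] : forall n, exists x, ([set: T] `\ o) x /\ r x = n.
  by move=> n; have [x Ax rx] := r_surj n I; exists x.
exists t, r; split => [n | n | x xo]; first by case: (t_spec n) => -[].
  by case: (t_spec n).
case: (t_spec (r x)) => t_in rt; apply: r_inj => //; exact/mem_set.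
Qed.

Section DiscreteLipschitz.
Context {R : realType} {T : Type} (d : T -> T -> R) (o : T) (theta B : R).
Hypothesis d_ge0 : forall x y, 0 <= d x y.
Hypothesis theta_gt0 : 0 < theta.
Hypothesis theta_le_d : forall x y, x <> y -> theta <= d x y.
Hypothesis d_le_B : forall x y, d x y <= B.

Local Notation Lip0 := (Lip0 d o).
Local Notation lipnorm := (lipnorm d).
Local Notation dualnorm := (dualnorm d o).

Lemma d_gt0 x y : x <> y -> 0 < d x y.
Proof. by move/theta_le_d; exact: lt_le_trans. Qed.

Lemma dense_seq_surj (s : nat -> T) :
  (forall x e, 0 < e -> exists n, d x (s n) < e) -> forall x, exists n, s n = x.
Proof.
move=> s_dense x; have [n dxs] := s_dense x theta theta_gt0; exists n.
by apply: contrapT => /nesym /theta_le_d; rewrite leNgt dxs.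
Qed.

(* No Lipschitz hypothesis is needed: [sup] of a set without supremum is [0]. *)
Lemma lipnorm_ge0 f : 0 <= lipnorm f.
Proof.
rewrite /lipnorm; set S := [set r | _].
have [[[? [x [y [xy _]]]] ubS]|/sup_out -> //] := pselect (has_sup S).
apply: le_trans (ub_le_sup ubS _); last by exists x, y.
by rewrite divr_ge0.
Qed.

Lemma lipnorm_le f C : 0 <= C ->
  (forall x y, `|f x - f y| <= C * d x y) -> lipnorm f <= C.
Proof.
move=> C_ge0 f_lip; rewrite /lipnorm; set S := [set r | _].
have [S0|S0] := pselect (S !=set0); last by rewrite sup_out // => -[].
by apply: ge_sup S0 _ => _ [x [y [xy ->]]]; rewrite ler_pdivrMr ?d_gt0.
Qed.

Lemma Lip0_lipschitz f : Lip0 f -> forall x y, `|f x - f y| <= lipnorm f * d x y.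
Proof.
move=> [_ [C f_lip]] x y; have [->|xy] := pselect (x = y).
  by rewrite subrr normr0 mulr_ge0 ?lipnorm_ge0.
rewrite -ler_pdivrMr ?d_gt0 //; apply: ub_le_sup; last by exists x, y.
by exists C => _ [u [v [uv ->]]]; rewrite ler_pdivrMr ?d_gt0.
Qed.

Lemma Lip0_le f : Lip0 f -> forall x, `|f x| <= B * lipnorm f.
Proof.
move=> Lf x; have := Lip0_lipschitz Lf x o; rewrite Lf.1 subr0 mulrC.
by move/le_trans; apply; apply: ler_wpM2r; [exact: lipnorm_ge0 | exact: d_le_B].
Qed.

Section BoundedFunction.
Variables (f : T -> R) (M : R).
Hypothesis f_le : forall x, `|f x| <= M.

Let K_ge0 : 0 <= 2 * M / theta.
Proof.
have M_ge0 : 0 <= M := le_trans (normr_ge0 _) (f_le o).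
by apply: divr_ge0; [exact: mulr_ge0 | exact: ltW].
Qed.

Lemma bounded_lipschitz x y : `|f x - f y| <= 2 * M / theta * d x y.
Proof.
have [->|xy] := pselect (x = y); first by rewrite subrr normr0 mulr_ge0 ?K_ge0.
apply: le_trans (ler_normB (f x) (f y)) _.
apply: (@le_trans _ _ (2 * M / theta * theta)).
  by rewrite divfK ?gt_eqF //; have := f_le x; have := f_le y; lra.
by apply: ler_wpM2l => //; exact: theta_le_d.
Qed.

Lemma bounded_Lip0 : f o = 0 -> Lip0 f.
Proof. by split => //; exists (2 * M / theta); exact: bounded_lipschitz. Qed.

Lemma bounded_lipnorm : lipnorm f <= 2 * M / theta.
Proof. exact: lipnorm_le K_ge0 bounded_lipschitz. Qed.

End BoundedFunction.

Lemma indicator_id (x : T) : indicator x x = 1 :> R.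
Proof. by rewrite /indicator; case: pselect. Qed.

Lemma indicator_neq (x y : T) : y <> x -> indicator x y = 0 :> R.
Proof. by rewrite /indicator; case: pselect. Qed.

Lemma indicator_near1 (x y : T) : `|indicator x y - 1 : R| < 1 -> y = x.
Proof.
by rewrite /indicator; case: pselect => // yx; rewrite sub0r normrN normr1 ltxx.
Qed.

Lemma Lip0_indicator x : x <> o -> Lip0 (indicator x).
Proof.
move=> xo; apply: (@bounded_Lip0 _ 1); last exact: indicator_neq (nesym xo).
by move=> y; rewrite /indicator; case: pselect => ? /=; rewrite ?normr1 ?normr0.
Qed.

Lemma lipnorm0 : lipnorm (fun=> 0) = 0.
Proof.
by apply/le_anti; rewrite lipnorm_ge0 lipnorm_le // => x y; rewrite subrr normr0 mul0r.
Qed.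

Lemma linear_onZ phi a f : linear_on Lip0 phi -> bounded_on d Lip0 phi -> Lip0 f ->
  phi (fun x => a * f x) = a * phi f.
Proof.
move=> phi_lin [C phi_le] Lf.
have L0 : Lip0 (fun=> 0) by apply: (@bounded_Lip0 _ 0) => // x; rewrite normr0.
have phi0 : phi (fun=> 0) = 0.
  by apply/eqP; rewrite -normr_le0; move: (phi_le _ L0); rewrite lipnorm0 mulr0.
rewrite -[RHS]addr0 -phi0 -phi_lin //.
by congr phi; apply: funext => x; rewrite addr0.
Qed.

Lemma dualnorm_le phi : linear_on Lip0 phi -> bounded_on d Lip0 phi ->
  forall f, Lip0 f -> `|phi f| <= dualnorm phi * lipnorm f.
Proof.
move=> phi_lin phi_bd f Lf; have [C phi_le] := phi_bd.
have [Lf0|Lf_neq0] := eqVneq (lipnorm f) 0.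
  by move: (phi_le f Lf); rewrite Lf0 !mulr0.
have Lf_gt0 : 0 < lipnorm f by rewrite lt_def Lf_neq0 lipnorm_ge0.
pose h x := (lipnorm f)^-1 * f x.
have h_lip x y : `|h x - h y| <= 1 * d x y.
  rewrite /h -mulrBr normrM gtr0_norm ?invr_gt0 // mul1r ler_pdivrMl //.
  exact: Lip0_lipschitz.
have Lh : Lip0 h by split; [rewrite /h Lf.1 mulr0 | exists 1].
have : `|phi h| <= dualnorm phi.
  apply: ub_le_sup; last by exists h; split; [|split; [exact: lipnorm_le|]].
  exists `|C| => _ [g [Lg [g_le1 ->]]]; apply: le_trans (phi_le g Lg) _.
  by have := lipnorm_ge0 g; have := ler_norm C; have := normr_ge0 C; nra.
by rewrite /h linear_onZ // normrM gtr0_norm ?invr_gt0 // ler_pdivrMl // mulrC.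
Qed.

Lemma delta_comb_linear s : linear_on Lip0 (delta_comb s).
Proof.
move=> a f g _ _; rewrite /delta_comb mulr_sumr -big_split.
by apply: eq_bigr => p _ /=; ring.
Qed.

Lemma delta_comb_bounded s : bounded_on d Lip0 (delta_comb s).
Proof.
exists (\sum_(p <- s) `|p.1| * B) => f Lf; rewrite mulr_suml.
apply: le_trans (ler_norm_sum _ _ _) _; apply: ler_sum => p _.
by rewrite normrM -mulrA ler_wpM2l // Lip0_le.
Qed.

Lemma delta_comb_eq0 (s : seq (R * T)) f :
  (forall x, List.In x (map snd s) -> f x = 0) -> delta_comb s f = 0.
Proof.
rewrite /delta_comb; elim: s => [|p s IH] f0; first by rewrite big_nil.
by rewrite big_cons IH => [|x sx]; [rewrite f0 ?mulr0 ?addr0 //; left | apply: f0; right].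
Qed.

Definition finitely_tight (phi : (T -> R) -> R) : Prop :=
  forall e, 0 < e -> exists S : seq T, forall f, Lip0 f ->
    (forall x, List.In x S -> f x = 0) -> `|phi f| <= e * lipnorm f.

Lemma inF_tight gamma : inF d o gamma -> finitely_tight gamma.
Proof.
move=> [gamma_lin [[Cg gamma_le] gamma_approx]] e e_gt0.
have [s gamma_s] := gamma_approx e e_gt0; exists (map snd s) => f Lf f0.
pose phi g := gamma g - delta_comb s g.
have phi_lin : linear_on Lip0 phi.
  by move=> a g h Lg Lh; rewrite /phi gamma_lin // delta_comb_linear //; ring.
have phi_bd : bounded_on d Lip0 phi.
  have [Cs comb_le] := delta_comb_bounded s.
  exists (Cg + Cs) => g Lg; rewrite mulrDl; apply: le_trans (ler_normB _ _) _.
  exact: lerD (gamma_le g Lg) (comb_le g Lg).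
have := dualnorm_le phi_lin phi_bd Lf; rewrite /phi delta_comb_eq0 // subr0.
by move/le_trans; apply; apply: ler_wpM2r; [exact: lipnorm_ge0 | exact: gamma_s].
Qed.

Definition vanish_at (y : T) (f : T -> R) : T -> R :=
  fun x => if pselect (x = y) then 0 else f x.

Definition vanish_on (S : seq T) (f : T -> R) : T -> R := foldr vanish_at f S.

Lemma vanish_on_le S f x : `|vanish_on S f x| <= `|f x|.
Proof.
elim: S => [|y S IH] //=; rewrite /vanish_at.
by case: pselect => ? //=; rewrite normr0.
Qed.

Lemma vanish_on_in S f x : List.In x S -> vanish_on S f x = 0.
Proof.
elim: S => [|y S IH] //= xS; rewrite /vanish_at.
by case: pselect => // xy; apply: IH; case: xS => // yx; case: xy.
Qed.

Lemma vanish_on_Lip0 S f : Lip0 f -> Lip0 (vanish_on S f).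
Proof.
move=> Lf; apply: (@bounded_Lip0 _ (B * lipnorm f)) => [x|].
  exact: le_trans (vanish_on_le S f x) (Lip0_le Lf x).
by have := vanish_on_le S f o; rewrite Lf.1 normr0 normr_le0 => /eqP.
Qed.

Lemma vanish_at_indicators phi y g : linear_on Lip0 phi ->
    (forall z, z <> o -> phi (indicator z) = 0) -> Lip0 g ->
  phi (vanish_at y g) = phi g.
Proof.
move=> phi_lin phi_ind Lg; have [->|yo] := pselect (y = o).
  congr phi; apply: funext => x; rewrite /vanish_at.
  by case: pselect => //= ->; rewrite Lg.1.
have -> : phi g = phi (fun x => g y * indicator y x + vanish_at y g x).
  congr phi; apply: funext => x; rewrite /vanish_at /indicator.
  by case: pselect => /= [->|_]; rewrite ?mulr1 ?addr0 ?mulr0 ?add0r.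
rewrite phi_lin ?phi_ind ?mulr0 ?add0r //; first exact: Lip0_indicator.
exact: (@vanish_on_Lip0 [:: y]).
Qed.

Lemma vanish_on_indicators phi S f : linear_on Lip0 phi ->
    (forall z, z <> o -> phi (indicator z) = 0) -> Lip0 f ->
  phi (vanish_on S f) = phi f.
Proof.
move=> phi_lin phi_ind Lf; elim: S => [|y S IH] //=.
by rewrite vanish_at_indicators ?IH //; exact: vanish_on_Lip0.
Qed.

Lemma eq0_on_indicators phi : linear_on Lip0 phi -> finitely_tight phi ->
  (forall z, z <> o -> phi (indicator z) = 0) -> forall f, Lip0 f -> phi f = 0.
Proof.
move=> phi_lin phi_tight phi_ind f Lf.
pose K := 2 * (B * lipnorm f) / theta.
have K_ge0 : 0 <= K.
  apply: divr_ge0 (ltW theta_gt0).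
  by rewrite mulr_ge0 // (le_trans (normr_ge0 _) (Lip0_le Lf o)).
apply/eqP; rewrite -normr_le0; apply/ler_addgt0Pr => e e_gt0; rewrite add0r.
have K1_gt0 : 0 < K + 1 by rewrite ltr_wpDl.
have [S phi_S] := phi_tight (e / (K + 1)) (divr_gt0 e_gt0 K1_gt0).
have LS : lipnorm (vanish_on S f) <= K.
  exact: bounded_lipnorm (fun x => le_trans (vanish_on_le S f x) (Lip0_le Lf x)).
rewrite -(vanish_on_indicators S phi_lin phi_ind Lf).
apply: le_trans (phi_S _ (vanish_on_Lip0 S Lf) (vanish_on_in f)) _.
apply: (@le_trans _ _ (e / (K + 1) * (K + 1))); last by rewrite divfK ?gt_eqF.
by apply: ler_wpM2l; [rewrite ltW ?divr_gt0 | lra].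
Qed.

Section WeakClosure.
Variable X : set (T -> R).
Hypothesis X_indicator : forall x, x <> o -> X (indicator x).

Lemma weak_closure_indicator gamma y : weak_closure_delta X gamma -> y <> o ->
  gamma (indicator y) = 0 \/ gamma (indicator y) = 1.
Proof.
move=> gamma_wc yo; set c := gamma (indicator y).
have near01 e : 0 < e -> `|0 - c| < e \/ `|1 - c| < e.
  move=> e_gt0; have := gamma_wc 1%N (fun=> indicator y) e (fun=> X_indicator yo) e_gt0.
  by case=> x /(_ ord0); rewrite /indicator; case: pselect => ? /=; [right | left].
apply: contrapT => /not_orP[c_neq0 c_neq1].
have e_gt0 : 0 < Num.min `|0 - c| `|1 - c|.
  by rewrite lt_min !normr_gt0 !subr_eq0; apply/andP; split; apply/eqP => /esym.
by case: (near01 _ e_gt0); rewrite lt_min ltxx ?andbF.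
Qed.

Lemma weak_closure_indicator_inj gamma y z : weak_closure_delta X gamma ->
  y <> o -> z <> o -> gamma (indicator y) = 1 -> gamma (indicator z) = 1 -> y = z.
Proof.
move=> gamma_wc yo zo gamma_y gamma_z.
pose fs (i : 'I_2) : T -> R := if val i == 0%N then indicator y else indicator z.
have X_fs i : X (fs i) by rewrite /fs; case: ifP => _; exact: X_indicator.
have [x x_near] := gamma_wc 2%N fs 1 X_fs ltr01.
move: (x_near ord0) (x_near ord_max); rewrite /fs /= gamma_y gamma_z.
by move=> /indicator_near1 <- /indicator_near1.
Qed.

Lemma weak_closure_delta_eq gamma : inF d o gamma -> weak_closure_delta X gamma ->
  exists x, feq d o gamma (delta x).
Proof.
move=> gammaF gamma_wc; have gamma_tight := inF_tight gammaF.
have [[y [yo gamma_y]]|gamma_ind] :=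
  pselect (exists y, y <> o /\ gamma (indicator y) <> 0); last first.
  exists o => f Lf; rewrite /delta Lf.1.
  apply: (eq0_on_indicators gammaF.1 gamma_tight) => // z zo.
  by apply: contrapT => gamma_z; apply: gamma_ind; exists z.
have {}gamma_y : gamma (indicator y) = 1.
  by case: (weak_closure_indicator gamma_wc yo).
exists y => f Lf; apply/eqP; rewrite -subr_eq0; apply/eqP.
apply: (eq0_on_indicators (phi := fun g => gamma g - delta y g))
  => // [a g h Lg Lh|e e_gt0|z zo].
- by rewrite /delta gammaF.1 //; ring.
- have [S gamma_S] := gamma_tight e e_gt0; exists (y :: S) => g Lg g0.
  rewrite /delta (g0 y (or_introl erefl)) subr0.
  by apply: gamma_S => // x xS; apply: g0; right.
- rewrite /delta; have [->|zy] := pselect (z = y).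
    by rewrite gamma_y indicator_id subrr.
  rewrite indicator_neq; last exact: nesym.
  have [->|gamma_z] := weak_closure_indicator gamma_wc zo; first by rewrite subr0.
  by case: zy; exact: weak_closure_indicator_inj gamma_wc zo yo gamma_z gamma_y.
Qed.

Lemma weak_accumulation_delta_eq0 gamma : inF d o gamma ->
  weak_accumulation_delta d o X gamma -> feq d o gamma (fun=> 0).
Proof.
move=> gammaF gamma_acc.
have [y gamma_y] : exists y, feq d o gamma (delta y).
  apply: weak_closure_delta_eq => // n fs e X_fs e_gt0.
  by have [x [_ x_near]] := gamma_acc n fs e X_fs e_gt0; exists x.
have [y_o|yo] := pselect (y = o).
  by move=> f Lf; rewrite gamma_y // /delta y_o Lf.1.
have [x [x_neq]] := gamma_acc 1%N (fun=> indicator y) 1 (fun=> X_indicator yo) ltr01.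
move=> /(_ ord0); rewrite gamma_y; last exact: Lip0_indicator.
rewrite /delta indicator_id.
by move=> /indicator_near1 xy; case: x_neq => f Lf; rewrite gamma_y // xy.
Qed.

End WeakClosure.

Section Enumeration.
Variables (X : set (T -> R)) (t : nat -> T) (r : T -> nat).
Hypothesis X_banach : banach_subspace d o X.
Hypothesis X_predual : isometric_predual d o X.
Hypothesis X_indicator : forall x, x <> o -> X (indicator x).
Hypothesis t_neq_o : forall n, t n <> o.
Hypothesis r_t : cancel t r.
Hypothesis t_r : forall x, x <> o -> t (r x) = x.

Let t_inj : injective t := can_inj r_t.

Lemma c0_comp_enum f : X f -> c0 (f \o t).
Proof.
move=> Xf; apply: contrapT => /not_c0[e e_gt0 f_far].
have [U [UU U_far U_tail]] := ultra_unbounded f_far.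
pose psi (g : T -> R) := ulim U (g \o t).
have X_le g : X g -> forall n, `|(g \o t) n| <= B * lipnorm g.
  by move=> Xg n; exact: Lip0_le (X_banach.1 g Xg) (t n).
have psi_lin : linear_on X psi.
  by move=> a g h Xg Xh; exact: ulimD (X_le g Xg) (X_le h Xh).
have psi_bd : bounded_on d X psi by exists B => g Xg; exact: ulim_le (X_le g Xg).
have [gamma [gammaF gamma_psi]] := X_predual.2 psi psi_lin psi_bd.
have gamma_f : gamma f = 0.
  apply: (eq0_on_indicators gammaF.1 (inF_tight gammaF)) (X_banach.1 f Xf) => z zo.
  rewrite gamma_psi; last exact: X_indicator.
  rewrite /psi /ulim; apply: lim_near_cst => //.
  have [[m <-]|z_t] := pselect (exists m, t m = z).
    apply: filterS (U_tail m.+1) => n /= mn; rewrite indicator_neq // => /t_inj nm.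
    by move: mn; rewrite nm ltnn.
  by apply: nearW => n /=; rewrite indicator_neq // => tn; apply: z_t; exists n.
have [n [/= e_le]] := filter_ex (filterI U_far (ulim_near (X_le f Xf) e_gt0)).
by rewrite -/(psi f) -gamma_psi // gamma_f subr0 ltNge e_le.
Qed.

Lemma weak_accumulation_delta0 : weak_accumulation_delta d o X (fun=> 0).
Proof.
move=> n fs e X_fs e_gt0.
have /choice [N fs_small] : forall i, exists N, forall m, (N <= m)%N -> `|fs i (t m)| < e.
  by move=> i; exact: c0_comp_enum (X_fs i) e e_gt0.
pose m := \max_i N i; exists (t m); split.
  move=> /(_ _ (Lip0_indicator (@t_neq_o m))); rewrite /delta indicator_id.
  exact/eqP/oner_neq0.
by move=> i; rewrite subr0; apply: fs_small; exact: leq_bigmax.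
Qed.

Definition sum_indicator_enum (u : nat -> R) (N : nat) : T -> R :=
  fun x => \sum_(k < N) u k * indicator (t k) x.

Lemma sum_indicator_enum_X u N : X (sum_indicator_enum u N).
Proof.
elim: N => [|N IH].
  have -> : sum_indicator_enum u 0 = fun=> 0.
    by apply: funext => x; rewrite /sum_indicator_enum big_ord0.
  exact: X_banach.2.1.
have -> : sum_indicator_enum u N.+1 =
    fun x => u N * indicator (t N) x + sum_indicator_enum u N x.
  by apply: funext => x; rewrite /sum_indicator_enum big_ord_recr addrC.
exact: X_banach.2.2.1 (X_indicator (@t_neq_o N)) IH.
Qed.

Lemma sum_indicator_enum_o u N : sum_indicator_enum u N o = 0.
Proof.
rewrite /sum_indicator_enum big1 // => k _.
by rewrite indicator_neq ?mulr0 // => /esym /t_neq_o.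
Qed.

Lemma sum_indicator_enum_t u N n :
  sum_indicator_enum u N (t n) = if (n < N)%N then u n else 0.
Proof.
rewrite /sum_indicator_enum; case: ltnP => [nN|Nn].
  rewrite (bigD1 (Ordinal nN)) //= indicator_id mulr1 big1 ?addr0 // => k kn.
  rewrite indicator_neq ?mulr0 // => /t_inj nk.
  by move: kn; rewrite -(inj_eq val_inj) /= nk eqxx.
rewrite big1 // => k _; rewrite indicator_neq ?mulr0 // => /t_inj nk.
by move: (ltn_ord k); rewrite -nk ltnNge Nn.
Qed.

Definition of_enum (u : nat -> R) : T -> R :=
  fun x => if pselect (x = o) then 0 else u (r x).

Lemma of_enum_o u : of_enum u o = 0.
Proof. by rewrite /of_enum; case: pselect. Qed.

Lemma of_enum_t u n : of_enum u (t n) = u n.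
Proof. by rewrite /of_enum; case: pselect => [/t_neq_o|? /=] //; rewrite r_t. Qed.

Lemma of_enum_X u : c0 u -> X (of_enum u).
Proof.
move=> u_c0; have [M u_le] := c0_bounded u_c0.
have Lu : Lip0 (of_enum u).
  apply: (@bounded_Lip0 _ M); last exact: of_enum_o.
  move=> x; have [->|xo] := pselect (x = o).
    by rewrite of_enum_o normr0 (le_trans _ (u_le 0%N)).
  by rewrite -(t_r xo) of_enum_t.
apply: X_banach.2.2.2 Lu _ => e e_gt0.
have eps_gt0 : 0 < e * theta / 2 by rewrite divr_gt0 ?mulr_gt0.
have [N u_small] := u_c0 _ eps_gt0.
exists (sum_indicator_enum u N); split; first exact: sum_indicator_enum_X.
have -> : e = 2 * (e * theta / 2) / theta by field; rewrite gt_eqF.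
apply: bounded_lipnorm => x; have [->|xo] := pselect (x = o).
  by rewrite sum_indicator_enum_o of_enum_o subr0 normr0 ltW.
rewrite -(t_r xo) of_enum_t sum_indicator_enum_t.
by case: ltnP => [_|/u_small/ltW]; rewrite ?subrr ?normr0 ?subr0 // ltW.
Qed.

Lemma isomorphic_c0 : isomorphic_to_c0 d X.
Proof.
exists (fun f n => f (t n)); split; [|split; [by [] | split]].
- by move=> f Xf; exact: c0_comp_enum.
- move=> u u_c0; exists (of_enum u); split; first exact: of_enum_X.
  by apply: funext => n; exact: of_enum_t.
have B_gt0 : 0 < B.
  exact: lt_le_trans theta_gt0 (le_trans (theta_le_d (@t_neq_o 0%N)) (d_le_B _ _)).
exists (theta / 2), B; split; first by rewrite divr_gt0.
split=> // f Xf; have Lf := X_banach.1 f Xf.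
rewrite /supnorm; set S := [set _ | _].
have S_ub : has_ubound S by exists (B * lipnorm f) => _ [n ->]; exact: Lip0_le.
have f_le x : `|f x| <= sup S.
  have [->|xo] := pselect (x = o).
    by rewrite Lf.1 normr0 (le_trans _ (ub_le_sup S_ub (ex_intro _ 0%N erefl))).
  by rewrite -(t_r xo); apply: ub_le_sup => //; exists (r x).
split; last by apply: ge_sup => [|_ [n ->]]; [exists `|f (t 0%N)|, 0%N | exact: Lip0_le].
apply: le_trans (ler_wpM2l _ (bounded_lipnorm f_le)) _; first by rewrite divr_ge0 ?ltW.
by rewrite le_eqVlt; apply/orP; left; apply/eqP; field; rewrite gt_eqF.
Qed.

End Enumeration.

End DiscreteLipschitz.

Theorem proposition3p8 (R : realType) (T : Type) (d : T -> T -> R) (o : T)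
  (X : set (T -> R)) :
  is_metric d -> uniformly_discrete d -> bounded_metric d -> separable_metric d ->
  @infinite_space T ->
  banach_subspace d o X -> isometric_predual d o X ->
  (forall x : T, x <> o -> X (indicator x)) ->
  natural_predual d o X /\
  (weak_accumulation_delta d o X (fun _ => 0%R) /\
   forall gamma, inF d o gamma -> weak_accumulation_delta d o X gamma ->
     feq d o gamma (fun _ => 0%R)) /\
  isomorphic_to_c0 d X.
Proof.
move=> [d_ge0 _] [theta [theta_gt0 theta_le_d]] [B d_le_B] [s s_dense] T_inf.
move=> X_banach X_predual X_indicator.
have s_surj := dense_seq_surj theta_gt0 theta_le_d s_dense.
have [t [r [t_neq_o r_t t_r]]] :=
  enum_setT_punctured o s_surj (infinite_space_setT T_inf).
split; [split=> // gamma | split; [split=> [|gamma] | ]].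
- exact: (weak_closure_delta_eq d_ge0 theta_gt0 theta_le_d d_le_B X_indicator).
- exact: (weak_accumulation_delta0 d_ge0 theta_gt0 theta_le_d d_le_B X_banach X_predual
    X_indicator t_neq_o r_t).
- exact: (weak_accumulation_delta_eq0 d_ge0 theta_gt0 theta_le_d d_le_B X_indicator).
- exact: (isomorphic_c0 d_ge0 theta_gt0 theta_le_d d_le_B X_banach X_predual X_indicator
    t_neq_o r_t t_r).
Qed.
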